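(* For every natural number $n$ and every permutation $\sigma$, $$\sum_{\pi\in\mathcal{S}_n(\sigma)}t^{\mathrm{des}(\pi)}=\sum_{[y]\in[\mathrm{Cay}_n][\sigma^{-1}]}t^{\log_2|[y]|}.$$
   Context: $\mathrm{Cay}_n$ is the set of Cayley permutations of length $n$ (words of positive integers in which every integer from $1$ to the maximum occurs). Containment $y\le x$: indices $i_1<\dots<i_k$ ($k$ the length of $y$) with $x(i_s)<x(i_t)\iff y(s)<y(t)$ and $x(i_s)=x(i_t)\iff y(s)=y(t)$. $\mathcal{S}_n(\sigma)$ is the set of permutations of $[n]$ avoiding $\sigma$, and $\mathrm{des}(\pi)=|\{i:\pi(i)>\pi(i+1)\}|$. For $x\in\mathrm{Cay}_n$, $\gamma(x)$ is the permutation obtained by sorting the pairs $(x(i),i)$ increasingly by first coordinate, ties by decreasing second coordinate, and reading the second coordinates. $x\sim y$ iff $\gamma(x)=\gamma(y)$; $[y]$ is the class of $y$ (all its elements have the same length). For classes, $[x]\ge[y]$ iff $x'\ge y'$ for some $x'\in[x]$, $y'\in[y]$. $[\mathrm{Cay}_n][\sigma^{-1}]$ denotes the set of classes $[y]$ with $y\in\mathrm{Cay}_n$ and $[y]\not\ge[\sigma^{-1}]$. $t$ is an indeterminate. *)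

From HB Require Import structures.
From mathcomp Require Import all_boot all_order all_algebra all_fingroup.
Set Implicit Arguments. Unset Strict Implicit. Unset Printing Implicit Defensive.
Import GRing.Theory.

(* Words are represented as [seq nat]; positions/values are 1-based as in the paper. *)

Definition cayley (x : seq nat) : bool :=
  all (fun a => 0 < a) x && all (fun k => k \in x) (iota 1 (foldr maxn 0 x)).

Definition contains (x y : seq nat) : bool :=
  [exists m : (size x).-tuple bool,
    let s := mask m x in
    (size s == size y) &&
    [forall i : 'I_(size y), forall j : 'I_(size y),
       ((nth 0 s i < nth 0 s j) == (nth 0 y i < nth 0 y j)) &&
       ((nth 0 s i == nth 0 s j) == (nth 0 y i == nth 0 y j))]].

(* gamma x : sort the pairs (x(i), i) increasingly by first coordinate, ties by
   decreasing second coordinate, read off second coordinates (1-based indices). *)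
Definition gamma_ord (x : seq nat) (i j : nat) : bool :=
  (nth 0 x i.-1 < nth 0 x j.-1) || ((nth 0 x i.-1 == nth 0 x j.-1) && (j <= i)).
Definition gamma (x : seq nat) : seq nat :=
  sort (gamma_ord x) (iota 1 (size x)).

Definition des (s : seq nat) : nat :=
  count (fun i => nth 0 s i.+1 < nth 0 s i) (iota 0 (size s).-1).

Definition pword k (p : 'S_k) : seq nat := [seq (p i).+1 | i <- enum 'I_k].

(* Words of length n with entries in 0..n; every Cayley permutation of length n
   is (the value of) such a tuple. *)
Definition CT (n : nat) := (n.-tuple 'I_n.+1)%type.
Definition tw n m (x : n.-tuple 'I_m) : seq nat := map (@nat_of_ord m) x.

Definition cay_class n (y : CT n) : {set CT n} :=
  [set x : CT n | cayley (tw x) && (gamma (tw x) == gamma (tw y))].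

Definition cay_classes n : {set {set CT n}} :=
  [set cay_class y | y in [pred y : CT n | cayley (tw y)]].

(* [x] >= [z] for a class C = [x] of length n and a Cayley permutation z:
   some x' in C contains some Cayley permutation z' with gamma z' = gamma z. *)
Definition class_ge n (C : {set CT n}) (z : seq nat) : bool :=
  [exists x' in C, exists z' : (size z).-tuple 'I_(size z).+1,
     [&& cayley (tw z'), gamma (tw z') == gamma z & contains (tw x') (tw z')]].

From HB Require Import structures.
From mathcomp Require Import all_boot all_order all_algebra all_fingroup.
From mathcomp Require Import zify.
Import GRing.Theory.
Set Implicit Arguments. Unset Strict Implicit. Unset Printing Implicit Defensive.

(* The map gamma sends the Cayley permutations of length n onto S_n, so the classes are the
   sets [p] = {x | gamma x = p}, one for each permutation p.  Read in the order p, an element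
   of [p] is a weakly increasing Cayley word, so it starts at 1 and rises by 0 or 1 at each
   step; since gamma breaks ties by decreasing position, it can stay level only at a descent
   of p.  Conversely every set of descents of p is the set of level steps of exactly one such
   word, whence |[p]| = 2^des(p).
   Gamma sorts positions by "smaller value, or equal value and later position", an order that
   every occurrence of a pattern preserves; so an occurrence of z in x is an occurrence of
   gamma(z)^-1 in gamma(x)^-1.  As gamma(sigma^-1) = sigma and inversion preserves containment
   of permutations, [p] >= [sigma^-1] exactly when p contains sigma. *)

Lemma mask_iota_nth (m : bitseq) (x : seq nat) :
  mask m x = map (nth 0 x) (mask m (iota 0 (size x))).
Proof. by rewrite map_mask -/(mkseq (nth 0 x) (size x)) mkseq_nth. Qed.

Lemma filter_iota_sorted (I : seq nat) m :
  sorted ltn I -> {in I, forall a, a < m} -> [seq a <- iota 0 m | a \in I] = I.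
Proof.
move=> I_sorted I_lt; apply: (sorted_eq ltn_trans).
- by move=> a b /andP[ab ba]; lia.
- exact: (sorted_filter ltn_trans _ (iota_ltn_sorted 0 m)).
- exact: I_sorted.
apply: uniq_perm; first exact: filter_uniq (iota_uniq 0 m).
  exact: (sorted_uniq ltn_trans ltnn I_sorted).
move=> a; rewrite mem_filter mem_iota add0n /=.
by case aI: (a \in I); rewrite ?andbF // (I_lt a aI).
Qed.

Section IncreasingOrd.
Variables (k m : nat) (f : 'I_k -> 'I_m).
Hypothesis f_incr : {homo f : i j / i < j}.

Lemma incr_ord_ltn : {mono f : i j / i < j}.
Proof.
move=> i j; case: (ltngtP i j) => [/f_incr -> //|/f_incr ji|/val_inj ->].
  by apply/negbTE; rewrite -leqNgt ltnW.
by rewrite ltnn.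
Qed.

Lemma incr_ord_leq : {mono f : i j / i <= j}.
Proof. by move=> i j; rewrite leqNgt incr_ord_ltn -leqNgt. Qed.

Lemma incr_ord_inj : injective f.
Proof.
by move=> i j fij; apply/val_inj/eqP; rewrite eqn_leq -!incr_ord_leq fij leqnn.
Qed.

End IncreasingOrd.

Definition occurrence (x y : seq nat) m k (f : 'I_k -> 'I_m) : Prop :=
  [/\ {homo f : i j / i < j},
      forall i j, (nth 0 x (f i) < nth 0 x (f j)) = (nth 0 y i < nth 0 y j) &
      forall i j, (nth 0 x (f i) == nth 0 x (f j)) = (nth 0 y i == nth 0 y j)].

Lemma containsP (x y : seq nat) m k : size x = m -> size y = k ->
  reflect (exists f : 'I_k -> 'I_m, occurrence x y f) (contains x y).
Proof.
move=> <- <-; apply: (iffP existsP) => [[mt /andP[/eqP size_s /forallP iso]]|].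
  set I := mask mt (iota 0 (size x)).
  have sE : mask mt x = map (nth 0 x) I by exact: mask_iota_nth.
  have size_I : size I = size y by rewrite -size_s sE size_map.
  have I_lt (i : 'I_(size y)) : nth 0 I i < size x.
    have /mem_mask : nth 0 I i \in I by rewrite mem_nth // size_I.
    by rewrite mem_iota add0n.
  have I_sorted : sorted ltn I.
    exact: (subseq_sorted ltn_trans (mask_subseq _ _) (iota_ltn_sorted 0 _)).
  exists (fun i => Ordinal (I_lt i)); split=> [i j ij /=|i j|i j] /=.
  - by apply: (sorted_ltn_nth ltn_trans 0 I_sorted) => //; rewrite inE size_I.
  - by have /forallP/(_ j)/andP[/eqP <- _] := iso i; rewrite sE !(nth_map 0) ?size_I.
  - by have /forallP/(_ j)/andP[_ /eqP <-] := iso i; rewrite sE !(nth_map 0) ?size_I.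
move=> [f [f_incr ltE eqE]].
pose I := [seq val (f i) | i <- enum 'I_(size y)].
have I_sorted : sorted ltn I.
  have : sorted ltn (map val (enum 'I_(size y))) by rewrite val_enum_ord iota_ltn_sorted.
  by rewrite !sorted_map; apply: sub_sorted => i j /f_incr.
have I_lt : {in I, forall a, a < size x} by move=> _ /mapP[i _ ->]; apply: ltn_ord.
have size_mt : size [seq a \in I | a <- iota 0 (size x)] == size x.
  by rewrite size_map size_iota.
exists (Tuple size_mt) => /=.
have sE : mask [seq a \in I | a <- iota 0 (size x)] x = map (nth 0 x) I.
  by rewrite mask_iota_nth -filter_mask filter_iota_sorted.
have nth_I (i : 'I_(size y)) : nth 0 I i = f i.
  by rewrite (nth_map i) ?size_enum_ord // nth_ord_enum.
have size_I : size I = size y by rewrite size_map size_enum_ord.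
rewrite sE size_map size_I eqxx; apply/forallP => i; apply/forallP => j.
by rewrite !(nth_map 0) ?size_I // !nth_I ltE eqE !eqxx.
Qed.

Lemma cayleyP (w : seq nat) :
  reflect ((forall a : nat, a \in w -> 0 < a) /\
           (forall a b : nat, b \in w -> 0 < a <= b -> a \in w)) (cayley w).
Proof.
rewrite /cayley foldrE; apply: (iffP andP) => [[/allP pos /allP full]|[pos down]].
  split=> // a b bw /andP[a_pos a_le]; apply: full; rewrite mem_iota a_pos add1n ltnS.
  exact: leq_trans a_le (@leq_bigmax_seq _ w xpredT id b bw isT).
split; first exact/allP.
apply/allP => a; rewrite mem_iota => a_le.
have [/hasP[b bw ab]|/hasPn all_lt] := boolP (has (leq a) w).
  by apply: (down a b bw); rewrite ab andbT; case/andP: a_le.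
have : \max_(b <- w) b <= a.-1 by apply/bigmax_leqP_seq => b /all_lt /=; lia.
lia.
Qed.

Lemma eq_cayley (w w' : seq nat) : w =i w' -> cayley w = cayley w'.
Proof.
move=> ww'; apply/cayleyP/cayleyP => -[pos down]; split.
- by move=> a; rewrite -ww'; apply: pos.
- by move=> a b; rewrite -!ww'; apply: down.
- by move=> a; rewrite ww'; apply: pos.
- by move=> a b; rewrite !ww'; apply: down.
Qed.

Section Gamma.
Variable x : seq nat.

Lemma gamma_ord_refl : reflexive (gamma_ord x).
Proof. by move=> i; rewrite /gamma_ord eqxx leqnn orbT. Qed.

Lemma gamma_ord_total : total (gamma_ord x).
Proof.
move=> i j; rewrite /gamma_ord.
by case: (ltngtP (nth 0 x i.-1) (nth 0 x j.-1)) => //= _; apply: leq_total.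
Qed.

Lemma gamma_ord_trans : transitive (gamma_ord x).
Proof. move=> j i l; rewrite /gamma_ord; case: eqP; case: eqP; lia. Qed.

Lemma gamma_ord_anti : antisymmetric (gamma_ord x).
Proof. move=> i j; rewrite /gamma_ord; case: eqP; case: eqP; lia. Qed.

Lemma gamma_sorted : sorted (gamma_ord x) (gamma x).
Proof. exact: sort_sorted gamma_ord_total _. Qed.

Lemma perm_gamma : perm_eq (gamma x) (iota 1 (size x)).
Proof. by rewrite /gamma perm_sort. Qed.

Lemma gammaP (w : seq nat) :
  perm_eq w (iota 1 (size x)) -> sorted (gamma_ord x) w -> gamma x = w.
Proof.
move=> w_perm w_sorted.
apply: (sorted_eq gamma_ord_trans gamma_ord_anti gamma_sorted w_sorted).
by rewrite (permPl perm_gamma) perm_sym.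
Qed.

End Gamma.

Section PermWords.
Variable n : nat.
Implicit Types p q : 'S_n.

Lemma size_pword p : size (pword p) = n.
Proof. by rewrite size_map size_enum_ord. Qed.

Lemma nth_pword p (i : 'I_n) : nth 0 (pword p) i = (p i).+1.
Proof. by rewrite (nth_map i) ?size_enum_ord // nth_ord_enum. Qed.

Lemma mem_pword p a : (a \in pword p) = (0 < a <= n).
Proof.
apply/mapP/idP => [[i _ ->] /=|a_range]; first exact: ltn_ord.
have a_lt : a.-1 < n by lia.
exists ((p^-1)%g (Ordinal a_lt)); first by rewrite mem_enum.
by rewrite permKV /=; lia.
Qed.

Lemma uniq_pword p : uniq (pword p).
Proof. by rewrite map_inj_uniq ?enum_uniq // => i j [] /val_inj; apply: perm_inj. Qed.

Lemma perm_pword_iota p : perm_eq (pword p) (iota 1 n).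
Proof.
apply: uniq_perm; [exact: uniq_pword|exact: iota_uniq|].
by move=> a; rewrite mem_pword mem_iota; lia.
Qed.

Lemma pword_inj : injective (@pword n).
Proof.
move=> p q pq; apply/permP => i; apply: val_inj.
by have := nth_pword p i; rewrite pq nth_pword => -[].
Qed.

Lemma cayley_pword p : cayley (pword p).
Proof. by apply/cayleyP; split=> [a|a b]; rewrite !mem_pword; lia. Qed.

Lemma pword_of_perm_iota (w : seq nat) :
  perm_eq w (iota 1 n) -> exists p, w = pword p.
Proof.
move=> w_perm.
have size_w : size w = n by rewrite (perm_size w_perm) size_iota.
have w_range (i : 'I_n) : 0 < nth 0 w i <= n.
  by rewrite -mem_iota -(perm_mem w_perm) mem_nth ?size_w.
pose f (i : 'I_n) : 'I_n := insubd i (nth 0 w i).-1.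
have val_f i : val (f i) = (nth 0 w i).-1.
  by rewrite val_insubd; have := w_range i; case: ifP => //; lia.
have f_inj : injective f.
  move=> i j /(congr1 val); rewrite !val_f => fij.
  have w_uniq : uniq w by rewrite (perm_uniq w_perm) iota_uniq.
  have w_ij : nth 0 w i = nth 0 w j by have := w_range i; have := w_range j; lia.
  by apply/ord_inj/eqP; rewrite -(nth_uniq 0 _ _ w_uniq) ?size_w // w_ij.
exists (perm f_inj); apply: (@eq_from_nth _ 0); first by rewrite size_pword.
move=> i; rewrite size_w => i_lt.
by rewrite (nth_pword _ (Ordinal i_lt)) permE val_f /=; have /= := w_range (Ordinal i_lt); lia.
Qed.

End PermWords.

Definition precomp n (x : seq nat) (p : 'S_n) : seq nat :=
  [seq nth 0 x (p i) | i <- enum 'I_n].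

Section Precomposition.
Variables (n : nat) (p : 'S_n).
Implicit Type x : seq nat.

Lemma size_precomp x : size (precomp x p) = n.
Proof. by rewrite size_map size_enum_ord. Qed.

Lemma nth_precomp x (i : 'I_n) : nth 0 (precomp x p) i = nth 0 x (p i).
Proof. by rewrite (nth_map i) ?size_enum_ord // nth_ord_enum. Qed.

Lemma nth_precomp_pword x s : s < n ->
  nth 0 (precomp x p) s = nth 0 x (nth 0 (pword p) s).-1.
Proof.
by move=> s_lt; rewrite (nth_precomp x (Ordinal s_lt)) (nth_pword p (Ordinal s_lt)).
Qed.

Lemma perm_precomp x : size x = n -> perm_eq (precomp x p) x.
Proof.
move=> size_x; apply/(perm_iotaP 0); exists [seq val (p i) | i <- enum 'I_n].
  rewrite size_x -val_enum_ord map_comp perm_map //.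
  apply: uniq_perm; [by rewrite map_inj_uniq ?enum_uniq //; exact: perm_inj|exact: enum_uniq|].
  by move=> i; rewrite mem_enum; apply/mapP; exists ((p^-1)%g i); rewrite ?mem_enum ?permKV.
by rewrite -map_comp.
Qed.

End Precomposition.

Lemma precompK n (p : 'S_n) (x : seq nat) : size x = n -> precomp (precomp x p) (p^-1)%g = x.
Proof.
move=> size_x; apply: (@eq_from_nth _ 0); first by rewrite size_precomp.
move=> i; rewrite size_precomp => i_lt.
by rewrite (nth_precomp _ _ (Ordinal i_lt)) nth_precomp permKV.
Qed.

Lemma precompVK n (p : 'S_n) (x : seq nat) : size x = n ->
  precomp (precomp x (p^-1)%g) p = x.
Proof. by move=> /(precompK (p^-1)%g); rewrite invgK. Qed.

Definition step_compatible (v w : seq nat) s : bool :=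
  (nth 0 v s < nth 0 v s.+1) ||
  (nth 0 v s == nth 0 v s.+1) && (nth 0 w s.+1 < nth 0 w s).

Lemma gamma_pwordE n (x : seq nat) (p : 'S_n) : size x = n ->
  gamma x = pword p <->
  forall s, s.+1 < n -> step_compatible (precomp x p) (pword p) s.
Proof.
move=> size_x.
have step s : s.+1 < n -> gamma_ord x (nth 0 (pword p) s) (nth 0 (pword p) s.+1) =
    step_compatible (precomp x p) (pword p) s.
  move=> s1_lt; have s_lt : s < n by lia.
  rewrite /gamma_ord /step_compatible !nth_precomp_pword //.
  have pword_neq : nth 0 (pword p) s.+1 != nth 0 (pword p) s.
    by rewrite nth_uniq ?size_pword ?uniq_pword // (gtn_eqF (ltnSn s)).
  by rewrite [_ < nth 0 (pword p) s]ltn_neqAle pword_neq.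
split=> [gamma_x s s_lt|steps].
  rewrite -step //; have /sortedP := gamma_sorted x.
  by rewrite gamma_x; apply; rewrite size_pword.
apply: gammaP; first by rewrite size_x perm_pword_iota.
by apply/(sortedP 0) => s; rewrite size_pword => s_lt; rewrite step // steps.
Qed.

Section SortedCayley.
Variable v : seq nat.
Hypotheses (v_sorted : sorted leq v) (v_cayley : cayley v).

Let v_mono r s : r <= s -> s < size v -> nth 0 v r <= nth 0 v s.
Proof.
move=> rs s_lt; apply: (sorted_leq_nth leq_trans leqnn 0 v_sorted) => //.
by rewrite inE; apply: leq_ltn_trans s_lt.
Qed.

Lemma sorted_cayley_head : 0 < size v -> nth 0 v 0 = 1.
Proof.
move=> v_nonempty; have [pos down] := cayleyP _ v_cayley.
have v0_pos : 0 < nth 0 v 0 by apply/pos/mem_nth.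
have /(nthP 0)[r r_lt v_r] : 1 \in v by apply: (down 1 (nth 0 v 0)); rewrite ?mem_nth.
by have := v_mono (leq0n r) r_lt; rewrite v_r; lia.
Qed.

Lemma sorted_cayley_next s : s.+1 < size v ->
  nth 0 v s.+1 = nth 0 v s + (nth 0 v s != nth 0 v s.+1).
Proof.
move=> s1_lt; have [_ down] := cayleyP _ v_cayley.
have le_next := v_mono (leqnSn s) s1_lt.
suff : nth 0 v s.+1 <= (nth 0 v s).+1 by case: eqP; lia.
rewrite leqNgt; apply/negP => jump.
have : (nth 0 v s).+1 \in v by apply: (down _ (nth 0 v s.+1)); rewrite ?mem_nth //; lia.
move=> /(nthP 0)[r r_lt v_r]; case: (leqP r s) => [rs|sr].
  by have := v_mono rs (ltnW s1_lt); rewrite v_r; lia.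
by have := v_mono sr r_lt; rewrite v_r; lia.
Qed.

End SortedCayley.

Lemma sorted_cayley_eq (v u : seq nat) : size v = size u ->
  sorted leq v -> sorted leq u -> cayley v -> cayley u ->
  (forall t, t.+1 < size v -> (nth 0 v t == nth 0 v t.+1) = (nth 0 u t == nth 0 u t.+1)) ->
  v = u.
Proof.
move=> size_vu v_sorted u_sorted v_cayley u_cayley same_plateaus.
apply: (eq_from_nth (x0 := 0) size_vu); elim=> [|s IHs] s_lt.
  by rewrite !sorted_cayley_head -?size_vu.
rewrite sorted_cayley_next -?size_vu // (sorted_cayley_next u_sorted) -?size_vu //.
by rewrite same_plateaus // IHs // ltnW.
Qed.

Lemma nat_ivt (f : nat -> nat) m a : (forall s, f s.+1 <= (f s).+1) ->
  f 0 <= a <= f m -> exists2 r, r <= m & f r = a.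
Proof.
move=> f_step; elim: m => [|m IHm] a_range; first by exists 0 => //; lia.
case: (leqP a (f m)) => a_le; last by exists m.+1 => //; have := f_step m; lia.
by have [|r rm fr] := IHm; [lia|exists r => //; lia].
Qed.

Definition staircase (P : pred nat) n : seq nat := mkseq (fun s => (count P (iota 0 s)).+1) n.

Section Staircase.
Variables (P : pred nat) (n : nat).

Lemma size_staircase : size (staircase P n) = n.
Proof. exact: size_mkseq. Qed.

Lemma count_iotaS s : count P (iota 0 s.+1) = count P (iota 0 s) + P s.
Proof. by rewrite -addn1 iotaD count_cat /= addn0. Qed.

Lemma staircase_next s : s.+1 < n ->
  nth 0 (staircase P n) s.+1 = nth 0 (staircase P n) s + P s.
Proof. by move=> s1_lt; rewrite !nth_mkseq ?count_iotaS ?addSn // ltnW. Qed.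

Lemma staircase_range a : a \in staircase P n -> 0 < a <= n.
Proof.
move=> /mapP[s]; rewrite mem_iota add0n => s_lt ->.
by have := count_size P (iota 0 s); rewrite size_iota; lia.
Qed.

Lemma cayley_staircase : cayley (staircase P n).
Proof.
apply/cayleyP; split=> [a /staircase_range /andP[] //|a b /mapP[r]].
rewrite mem_iota add0n => r_lt -> a_range.
have [||r' r'_le <-] := @nat_ivt (fun s => (count P (iota 0 s)).+1) r a.
- by move=> s; rewrite count_iotaS; case: (P s); lia.
- by rewrite /=; lia.
by apply/mapP; exists r'; rewrite // mem_iota; lia.
Qed.

End Staircase.

Lemma size_tw n m (x : n.-tuple 'I_m) : size (tw x) = n.
Proof. by rewrite size_map size_tuple. Qed.

Lemma tw_inj n m : injective (@tw n m).
Proof. by move=> x y /(inj_map val_inj) /val_inj. Qed.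

Definition word_tuple n m (w : seq nat) : n.-tuple 'I_m.+1 :=
  [tuple inord (nth 0 w i) | i < n].

Lemma tw_word_tuple n m (w : seq nat) :
  size w = n -> (forall a : nat, a \in w -> a <= m) -> tw (word_tuple n m w) = w.
Proof.
move=> size_w w_le; apply: (@eq_from_nth _ 0); first by rewrite size_tw.
move=> i; rewrite size_tw => i_lt.
rewrite (nth_map ord0) ?size_tuple // -[i]/(nat_of_ord (Ordinal i_lt)) nth_mktuple.
by rewrite inordK // ltnS w_le ?mem_nth ?size_w.
Qed.

Definition perm_class n (p : 'S_n) : {set CT n} :=
  [set x : CT n | cayley (tw x) && (gamma (tw x) == pword p)].

Definition perm_tuple n (p : 'S_n) : CT n := word_tuple n n (pword (p^-1)%g).

Section PermTuple.
Variables (n : nat) (p : 'S_n).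

Lemma tw_perm_tuple : tw (perm_tuple p) = pword (p^-1)%g.
Proof. by apply: tw_word_tuple => [|a]; rewrite ?size_pword // mem_pword => /andP[]. Qed.

Lemma gamma_pwordV : gamma (pword (p^-1)%g) = pword p.
Proof.
apply/gamma_pwordE; first exact: size_pword.
move=> s s1_lt; have s_lt : s < n by lia.
have nth_s r (r_lt : r < n) : nth 0 (precomp (pword (p^-1)%g) p) r = r.+1.
  by rewrite (nth_precomp _ _ (Ordinal r_lt)) nth_pword permK.
by rewrite /step_compatible !nth_s // ltnSn.
Qed.

Lemma perm_tuple_class : perm_tuple p \in perm_class p.
Proof. by rewrite inE tw_perm_tuple cayley_pword gamma_pwordV eqxx. Qed.

End PermTuple.

Lemma perm_class_inj n : injective (@perm_class n).
Proof.
move=> p q pq; have := perm_tuple_class p; rewrite pq inE => /andP[_ /eqP].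
by rewrite tw_perm_tuple gamma_pwordV => /pword_inj.
Qed.

Lemma cay_classesE n : cay_classes n = [set perm_class p | p : 'S_n].
Proof.
apply/setP => C; apply/imsetP/imsetP => [[y]|[p _ ->]].
  rewrite inE => y_cayley ->.
  have := perm_gamma (tw y); rewrite size_tw => /pword_of_perm_iota[p gamma_y].
  by exists p => //; apply/setP => x; rewrite !inE gamma_y.
exists (perm_tuple p); first by rewrite inE tw_perm_tuple cayley_pword.
by apply/setP => x; rewrite !inE tw_perm_tuple gamma_pwordV.
Qed.

Definition plateaus n (v : seq nat) : {set 'I_n.-1} :=
  [set t : 'I_n.-1 | nth 0 v t == nth 0 v t.+1].

Definition descents n (w : seq nat) : {set 'I_n.-1} :=
  [set t : 'I_n.-1 | nth 0 w t.+1 < nth 0 w t].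

Lemma card_descents n (w : seq nat) : size w = n -> #|descents n w| = des w.
Proof.
move=> <-; rewrite /des cardsE cardE -val_enum_ord count_map /enum_mem.
by rewrite size_filter count_filter; apply: eq_count => t /=; rewrite andbT.
Qed.

Section PermClassCard.
Variables (n : nat) (p : 'S_n).

Lemma perm_classP (x : CT n) :
  reflect (cayley (precomp (tw x) p) /\
           forall s, s.+1 < n -> step_compatible (precomp (tw x) p) (pword p) s)
          (x \in perm_class p).
Proof.
rewrite inE -(eq_cayley (perm_mem (perm_precomp p (size_tw x)))).
apply: (iffP andP) => [[x_cayley /eqP gamma_x]|[x_cayley steps]].
  by split=> //; apply/gamma_pwordE => //; exact: size_tw.
by split=> //; apply/eqP/gamma_pwordE => //; exact: size_tw.
Qed.

Lemma sorted_class_values (x : CT n) : x \in perm_class p -> sorted leq (precomp (tw x) p).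
Proof.
case/perm_classP => _ steps; apply/(sortedP 0) => s; rewrite size_precomp.
by move=> /steps /orP[/ltnW //|/andP[/eqP -> _]].
Qed.

Definition class_plateaus (x : CT n) := plateaus n (precomp (tw x) p).

Lemma class_plateaus_sub (x : CT n) :
  x \in perm_class p -> class_plateaus x \subset descents n (pword p).
Proof.
case/perm_classP => _ steps; apply/subsetP => t; rewrite !inE => /eqP flat.
have t1_lt : t.+1 < n by have := ltn_ord t; lia.
by have := steps t t1_lt; rewrite /step_compatible flat ltnn eqxx.
Qed.

Lemma class_plateaus_inj : {in perm_class p &, injective class_plateaus}.
Proof.
move=> x y x_class y_class same_plateaus.
apply: tw_inj; rewrite -(precompK p (size_tw x)) -(precompK p (size_tw y)); congr precomp.
have [x_cayley _] := perm_classP _ x_class; have [y_cayley _] := perm_classP _ y_class.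
apply: (sorted_cayley_eq _ _ _ x_cayley y_cayley).
- by rewrite !size_precomp.
- exact: sorted_class_values.
- exact: sorted_class_values.
move=> t; rewrite size_precomp => t1_lt; have t_lt : t < n.-1 by lia.
by have /setP/(_ (Ordinal t_lt)) := same_plateaus; rewrite !inE.
Qed.

Lemma class_plateaus_onto (S : {set 'I_n.-1}) :
  S \subset descents n (pword p) -> exists2 x, x \in perm_class p & class_plateaus x = S.
Proof.
move=> S_sub.
pose v := staircase [pred t | t \notin [seq val u | u <- enum S]] n.
have mem_S (t : 'I_n.-1) : (val t \in [seq val u | u <- enum S]) = (t \in S).
  by rewrite mem_map ?mem_enum //; exact: val_inj.
pose x := word_tuple n n (precomp v (p^-1)%g).
have v_x : precomp (tw x) p = v.
  rewrite tw_word_tuple ?size_precomp //.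
    exact/precompVK/size_staircase.
  move=> a; rewrite (perm_mem (perm_precomp _ (size_staircase _ n))).
  by move=> /staircase_range /andP[].
exists x.
  apply/perm_classP; rewrite v_x; split=> [|s s1_lt]; first exact: cayley_staircase.
  rewrite /step_compatible staircase_next //=.
  have s_lt : s < n.-1 by lia.
  have := mem_S (Ordinal s_lt); rewrite /= => ->.
  case: (boolP (Ordinal s_lt \in S)) => /= [s_S|_]; last by rewrite addn1 ltnSn.
  by move/subsetP: S_sub => /(_ _ s_S); rewrite inE addn0 ltnn eqxx.
apply/setP => t; rewrite inE /class_plateaus v_x.
have t1_lt : t.+1 < n by have := ltn_ord t; lia.
rewrite staircase_next //= -/v mem_S.
by case: (t \in S); rewrite ?addn0 ?addn1 ?eqxx // (ltn_eqF (ltnSn _)).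
Qed.

Lemma card_perm_class : #|perm_class p| = 2 ^ des (pword p).
Proof.
rewrite -(card_in_imset class_plateaus_inj).
have -> : class_plateaus @: perm_class p = powerset (descents n (pword p)).
  apply/setP => S; rewrite powersetE; apply/imsetP/idP => [[x x_class ->]|].
    exact: class_plateaus_sub.
  by move=> /class_plateaus_onto[x x_class <-]; exists x.
by rewrite card_powerset card_descents ?size_pword.
Qed.

End PermClassCard.

Lemma occurrence_pwordP n k (p : 'S_n) (s : 'S_k) (f : 'I_k -> 'I_n) :
  occurrence (pword p) (pword s) f <->
  {homo f : i j / i < j} /\ forall i j, (p (f i) < p (f j)) = (s i < s j).
Proof.
split=> [[f_incr ltE _]|[f_incr ltE]].
  by split=> // i j; have := ltE i j; rewrite !nth_pword.
split=> // i j; rewrite !nth_pword ?ltnS ?eqSS //.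
by rewrite !(inj_eq val_inj) !(inj_eq perm_inj) (inj_eq (incr_ord_inj f_incr)).
Qed.

Lemma contains_pword_inv n k (p : 'S_n) (s : 'S_k) :
  contains (pword p) (pword s) -> contains (pword (p^-1)%g) (pword (s^-1)%g).
Proof.
move/(containsP (size_pword p) (size_pword s)) => [f /occurrence_pwordP[f_incr ltE]].
apply/(containsP (size_pword _) (size_pword _)).
exists (fun b => p (f ((s^-1)%g b))); apply/occurrence_pwordP; split.
- by move=> i j ij; rewrite ltE !permKV.
- by move=> i j; rewrite !permK (incr_ord_ltn f_incr).
Qed.

Lemma contains_pwordV n k (p : 'S_n) (s : 'S_k) :
  contains (pword (p^-1)%g) (pword (s^-1)%g) = contains (pword p) (pword s).
Proof.
apply/idP/idP; last exact: contains_pword_inv.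
by move/contains_pword_inv; rewrite !invgK.
Qed.

Lemma gamma_ord_rank n (x : seq nat) (p : 'S_n) : size x = n -> gamma x = pword p ->
  forall i j : 'I_n, gamma_ord x i.+1 j.+1 = ((p^-1)%g i <= (p^-1)%g j).
Proof.
move=> size_x gamma_x.
have sorted_p : sorted (gamma_ord x) (pword p) by rewrite -gamma_x gamma_sorted.
have ranked (i j : 'I_n) : (p^-1)%g i <= (p^-1)%g j -> gamma_ord x i.+1 j.+1.
  have := sorted_leq_nth (@gamma_ord_trans x) (@gamma_ord_refl x) 0 sorted_p.
  move=> /(_ ((p^-1)%g i) ((p^-1)%g j)).
  by rewrite !inE size_pword !ltn_ord !nth_pword !permKV; apply.
move=> i j; apply/idP/idP => [ij|]; last exact: ranked.
rewrite leqNgt; apply/negP => ji; have := ranked j i (ltnW ji).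
move=> /(conj ij)/andP/gamma_ord_anti[]/val_inj eq_ij.
by rewrite eq_ij ltnn in ji.
Qed.

Lemma occurrence_gamma n k (x z : seq nat) (p : 'S_n) (s : 'S_k) (f : 'I_k -> 'I_n) :
  size x = n -> size z = k -> gamma x = pword p -> gamma z = pword s ->
  occurrence x z f -> occurrence (pword (p^-1)%g) (pword (s^-1)%g) f.
Proof.
move=> size_x size_z gamma_x gamma_z [f_incr ltE eqE].
apply/occurrence_pwordP; split=> // i j.
rewrite !ltnNge -(gamma_ord_rank size_x gamma_x) -(gamma_ord_rank size_z gamma_z).
by rewrite /gamma_ord /= ltE eqE !ltnS (incr_ord_leq f_incr).
Qed.

Lemma class_ge_perm_class n k (p : 'S_n) (s : 'S_k) :
  class_ge (perm_class p) (pword (s^-1)%g) = contains (pword p) (pword s).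
Proof.
rewrite -contains_pwordV; apply/existsP/idP => [[x /andP[]]|pV_contains].
  rewrite inE => /andP[_ /eqP gamma_x] /existsP[z /and3P[_ /eqP gamma_z x_contains]].
  rewrite gamma_pwordV in gamma_z.
  have size_z : size (tw z) = k by rewrite size_tw size_pword.
  have [f /(occurrence_gamma (size_tw x) size_z gamma_x gamma_z) f_occ] :=
    containsP (size_tw x) size_z x_contains.
  by apply/(containsP (size_pword _) (size_pword _)); exists f.
exists (perm_tuple p); rewrite perm_tuple_class /=.
apply/existsP; exists (word_tuple _ _ (pword (s^-1)%g)).
rewrite tw_word_tuple // ?cayley_pword ?eqxx ?tw_perm_tuple //.
by move=> a; rewrite mem_pword size_pword => /andP[].
Qed.

Unset Implicit Arguments.
Local Open Scope ring_scope.

Theorem corollary4p12 (n k : nat) (sigma : 'S_k) :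
  \sum_(pi : 'S_n | ~~ contains (pword pi) (pword sigma))
      ('X^(des (pword pi)) : {poly int})
  = \sum_(C in cay_classes n | ~~ class_ge C (pword (sigma^-1)%g))
      'X^(trunc_log 2 #|C|).
Proof.
rewrite big_mkcondr cay_classesE big_imset /=; last by move=> p q _ _ /perm_class_inj.
rewrite big_mkcond; apply: eq_big => // p _.
by rewrite class_ge_perm_class card_perm_class trunc_expnK.
Qed.
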